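(* Let $N>1$ and suppose $\tau$ is a linear-fractional self-map of $B_N$ such that $\tau(\lambda e_1)=\lambda e_1$ for every $\lambda\in\mathbb C$ with $|\lambda|=1$, where $e_1=(1,0,\dots,0)$. Then there is an $(N-1)\times(N-1)$ matrix $A'$ such that $\tau(z_1,z_2,\dots,z_N)=(z_1,A'z')$ for all $z\in B_N$, where $z'=(z_2,\dots,z_N)$.
   Context: $B_N$ is the open unit ball of $\mathbb C^N$ with inner product $\langle z,w\rangle=\sum z_j\overline{w_j}$. A linear-fractional self-map of $B_N$ is a map $\tau(z)=\frac{Az+B}{\langle z,C\rangle+d}$ ($A$ an $N\times N$ matrix, $B,C\in\mathbb C^N$, $d\in\mathbb C$) analytic on $B_N$ with $\tau(B_N)\subseteq B_N$; it is analytic on a neighborhood of $\overline{B_N}$. The hypothesis says $\tau$ restricted to the complex line $[e_1]=\{\lambda e_1:\lambda\in\mathbb C\}$ is the identity on $[e_1]\cap\partial B_N$. *)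

From HB Require Import structures.
From mathcomp Require Import all_boot all_order all_algebra.
From mathcomp Require Import complex.
Set Implicit Arguments. Unset Strict Implicit. Unset Printing Implicit Defensive.
Import Order.TTheory GRing.Theory Num.Theory.
Local Open Scope ring_scope.

(* Complex numbers: C := R[i] over an arbitrary real closed field R
   (for R = the reals this is the usual field of complex numbers).
   Points of C^N are column vectors 'cV[R[i]]_N. *)

Definition cinner (R : rcfType) (N : nat) (z w : 'cV[R[i]]_N) : R[i] :=
  \sum_(j < N) z j 0 * (w j 0)^*.

Definition in_ball (R : rcfType) (N : nat) (z : 'cV[R[i]]_N) : Prop :=
  \sum_(j < N) `|z j 0| ^+ 2 < 1.

Definition lfmap (R : rcfType) (N : nat) (A : 'M[R[i]]_N) (B C : 'cV[R[i]]_N)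
  (d : R[i]) (z : 'cV[R[i]]_N) : 'cV[R[i]]_N :=
  (cinner z C + d)^-1 *: (A *m z + B).

(* tau is a linear-fractional self-map of B_N: analytic on B_N (the
   denominator does not vanish on B_N) and tau(B_N) is contained in B_N. *)
Definition lf_selfmap (R : rcfType) (N : nat) (A : 'M[R[i]]_N) (B C : 'cV[R[i]]_N)
  (d : R[i]) : Prop :=
  forall z : 'cV[R[i]]_N, in_ball z ->
    cinner z C + d != 0 /\ in_ball (lfmap A B C d z).

Definition e1 (R : rcfType) (n : nat) : 'cV[R[i]]_n.+1 := delta_mx 0 0.

From HB Require Import structures.
From mathcomp Require Import all_boot all_order all_algebra.
From mathcomp Require Import complex ring lra.
Set Implicit Arguments. Unset Strict Implicit. Unset Printing Implicit Defensive.
Import Order.TTheory GRing.Theory Num.Theory.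
Local Open Scope ring_scope.

(* Clearing the denominator in tau(lam e1) = lam e1 gives, coordinatewise, a
   polynomial identity of degree 2 in lam valid on the unit circle; evaluating
   it at 1, -1 and 'i forces B = 0, C_1 = 0, A_11 = d and A_i1 = 0 for i <> 1.
   On the slice z = x e1 + y e_j the first coordinate of tau then becomes
   (x + a y) / (1 + g y) with a = A_1j / d and g = conj(C_j) / d, and such a map
   sends the unit ball of C^2 into the unit disc only when a = g = 0.  Hence
   C = 0, the first row of A is d e1, and tau(z) = A z / d. *)

Lemma circle_quadratic_eq0 (C : numClosedFieldType) (u v w : C) :
  (forall l : C, `|l| = 1 -> u * l ^+ 2 + v * l + w = 0) ->
  [/\ u = 0, v = 0 & w = 0].
Proof.
move=> H; have := H 1 (normr1 _); have := H (-1) (normrN1 _).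
have := H 'i (normCi _); rewrite sqrCi sqrrN expr1n !mulr1 !mulrN1 => Hi Hm Hp.
have double_eq0 (x : C) : x + x = 0 -> x = 0.
  by rewrite -mulr2n => /eqP; rewrite mulrn_eq0 => /eqP.
have v0 : v = 0.
  by apply: double_eq0; rewrite -[RHS](subrr 0) -{1}Hp -Hm; ring.
have u0 : u = 0.
  apply: double_eq0; rewrite -[RHS](subrr 0) -{1}Hp -Hi v0; ring.
by split=> //; rewrite -Hp u0 v0 !add0r.
Qed.

Lemma parallelogram_normC (C : numClosedFieldType) (u v : C) :
  `|u + v| ^+ 2 + `|u - v| ^+ 2 = 2 * (`|u| ^+ 2 + `|v| ^+ 2).
Proof. by rewrite !normCK rmorphD rmorphB /=; ring. Qed.

Section RealWitnesses.
Variable R : realFieldType.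

Lemma ball_escape_shift (p q : R) : 0 < p -> 0 <= q ->
  exists t s : R, t ^+ 2 + s ^+ 2 * p < 1 /\ 1 + q * (s ^+ 2 * p) <= (t + s * p) ^+ 2.
Proof.
move=> p_gt0 q_ge0; set s := (p + q + 1)^-1.
have s_gt0 : 0 < s by rewrite invr_gt0; lra.
have sK : s * (p + q + 1) = 1 by rewrite mulVf //; lra.
have sp : s * p = s ^+ 2 * p * (p + q + 1).
  by rewrite -[LHS]mulr1 -[in X in X = _]sK; ring.
exists (1 - s * p / 2), s; split.
- have : 0 < s ^+ 2 * p * (3 / 4 * p + q) by rewrite !mulr_gt0 ?exprn_gt0 //; lra.
  have -> : (1 - s * p / 2) ^+ 2 + s ^+ 2 * p =
            1 - s * p + s ^+ 2 * p * (p / 4 + 1) by field.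
  lra.
- have : 0 <= s ^+ 2 * p * (p + 1) by rewrite !mulr_ge0 ?exprn_ge0 //; lra.
  have : 0 <= (s * p) ^+ 2 / 4 by rewrite divr_ge0 ?sqr_ge0.
  have -> : (1 - s * p / 2 + s * p) ^+ 2 = 1 + s * p + (s * p) ^+ 2 / 4 by field.
  lra.
Qed.

Lemma ball_escape_scale (q : R) : 0 < q ->
  exists t s : R, t ^+ 2 + s ^+ 2 * q < 1 /\ (1 - s * q) ^+ 2 <= t ^+ 2.
Proof.
move=> q_gt0; set s := (1 + q)^-1.
have s_gt0 : 0 < s by rewrite invr_gt0; lra.
have sK : s * (1 + q) = 1 by rewrite mulVf //; lra.
have s_lt1 : s < 1 by rewrite invf_lt1; lra.
have sq : 1 - s * q = s by rewrite -[in X in X = _]sK; ring.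
exists s, s; rewrite sq; split=> //.
suff -> : s ^+ 2 + s ^+ 2 * q = s by [].
by rewrite -[RHS]mulr1 -[in X in _ = X]sK; ring.
Qed.

End RealWitnesses.

Section UnitBall.
Variable R : rcfType.
Local Notation C := R[i].

Lemma normC_sqr_real (k : R) : `|k%:C%C| ^+ 2 = (k ^+ 2)%:C%C.
Proof. by rewrite normc_def /= expr0n addr0 -rmorphXn sqr_sqrtr ?sqr_ge0. Qed.

Lemma sqr_normC_real (z : C) : exists p : R, `|z| ^+ 2 = p%:C%C.
Proof. by exists ((complex.Re z) ^+ 2 + (complex.Im z) ^+ 2); rewrite add_Re2_Im2. Qed.

Lemma ball_shift_eq0 (a g : C) :
  (forall x y : C, `|x| ^+ 2 + `|y| ^+ 2 < 1 ->
     `|x + a * y| ^+ 2 < `|1 + g * y| ^+ 2) ->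
  a = 0.
Proof.
move=> H.
(* Averaging over (x, y) and (-x, -y) removes the cross term of |1 + g y|^2. *)
have avg x y : `|x| ^+ 2 + `|y| ^+ 2 < 1 ->
    `|x + a * y| ^+ 2 < 1 + `|g| ^+ 2 * `|y| ^+ 2.
  move=> xy; have xy' : `|- x| ^+ 2 + `|- y| ^+ 2 < 1 by rewrite !normrN.
  have := ltrD (H x y xy) (H (- x) (- y) xy').
  rewrite mulrN -opprD normrN mulrN -/(1 - _) parallelogram_normC normr1 expr1n.
  by rewrite normrM exprMn -mulr2n -[_ *+ 2]mulr_natl ltr_pM2l.
apply/eqP/negPn/negP => a_neq0.
have [p ap] := sqr_normC_real a; have [q gq] := sqr_normC_real g.
have p_gt0 : 0 < p by rewrite -ltcR rmorph0 -ap exprn_gt0 ?normr_gt0.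
have q_ge0 : 0 <= q by rewrite -lecR rmorph0 -gq exprn_ge0.
have [t [s [ts_ball]]] := ball_escape_shift p_gt0 q_ge0.
apply/negP; rewrite -ltNge -ltcR.
have := avg t%:C%C (s%:C%C * a^*).
rewrite mulrCA -normCK ap normrM norm_conjC exprMn !normC_sqr_real ap gq.
rewrite -!rmorphM -!rmorphD normC_sqr_real; apply.
by rewrite -(rmorph1 (real_complex R)) ltcR.
Qed.

Lemma ball_denom_eq0 (g : C) :
  (forall x y : C, `|x| ^+ 2 + `|y| ^+ 2 < 1 -> `|x| ^+ 2 < `|1 + g * y| ^+ 2) ->
  g = 0.
Proof.
move=> H; apply/eqP/negPn/negP => g_neq0.
have [q gq] := sqr_normC_real g.
have q_gt0 : 0 < q by rewrite -ltcR rmorph0 -gq exprn_gt0 ?normr_gt0.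
have [t [s [ts_ball]]] := ball_escape_scale q_gt0.
apply/negP; rewrite -ltNge -ltcR.
have := H t%:C%C (- (s%:C%C * g^*)).
rewrite mulrN mulrCA -normCK gq normrN normrM norm_conjC exprMn !normC_sqr_real gq.
rewrite -!rmorphM -!rmorphD -(rmorph1 (real_complex R)) -rmorphB normC_sqr_real ltcR.
by apply; rewrite ltcR.
Qed.

Lemma ball_quotient_eq0 (a g : C) :
  (forall x y : C, `|x| ^+ 2 + `|y| ^+ 2 < 1 ->
     `|x + a * y| ^+ 2 < `|1 + g * y| ^+ 2) ->
  a = 0 /\ g = 0.
Proof.
move=> H; have a0 := ball_shift_eq0 H; split=> //.
by apply: ball_denom_eq0 => x y /H; rewrite a0 mul0r addr0.
Qed.

End UnitBall.

Lemma big_ord_pair (V : nmodType) (N : nat) (i j : 'I_N) (F : 'I_N -> V) :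
  i != j -> (forall k, k != i -> k != j -> F k = 0) -> \sum_k F k = F i + F j.
Proof.
move=> ij F0; rewrite (bigD1 i) //= (bigD1 j) 1?eq_sym //= big1 ?addr0 //.
by move=> k /andP[ki kj]; apply: F0.
Qed.

Section LinearFractional.
Variables (R : rcfType) (N : nat).
Implicit Types (A : 'M[R[i]]_N) (B C z : 'cV[R[i]]_N) (d : R[i]).

Lemma cinnerDl u v C : cinner (u + v) C = cinner u C + cinner v C.
Proof. by rewrite /cinner -big_split; apply: eq_bigr => k _; rewrite mxE mulrDl. Qed.

Lemma cinnerZl x u C : cinner (x *: u) C = x * cinner u C.
Proof. by rewrite /cinner mulr_sumr; apply: eq_bigr => k _; rewrite mxE mulrA. Qed.

Lemma cinner_delta (j : 'I_N) C : cinner (delta_mx j 0) C = (C j 0)^*.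
Proof.
rewrite /cinner (bigD1 j) //= big1 => [|k kj]; first by rewrite mxE !eqxx mul1r addr0.
by rewrite mxE (negbTE kj) mul0r.
Qed.

Lemma cinner0r z : cinner z 0 = 0.
Proof. by rewrite /cinner big1 // => k _; rewrite mxE conjC0 mulr0. Qed.

Lemma lfmap_coord A B C d z (i : 'I_N) :
  lfmap A B C d z i 0 = ((A *m z) i 0 + B i 0) / (cinner z C + d).
Proof. by rewrite /lfmap !mxE mulrC. Qed.

Lemma lfmap_affine A d z : lfmap A 0 0 d z = d^-1 *: (A *m z).
Proof. by rewrite /lfmap cinner0r add0r addr0. Qed.

Lemma in_ball_coord z (i : 'I_N) : in_ball z -> `|z i 0| ^+ 2 < 1.
Proof.
rewrite /in_ball (bigD1 i) //=; apply: le_lt_trans.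
by rewrite lerDl sumr_ge0 // => k _; rewrite exprn_ge0.
Qed.

End LinearFractional.

Section CircleFixed.
Variables (R : rcfType) (n : nat).
Variables (A : 'M[R[i]]_n.+1) (B C : 'cV[R[i]]_n.+1) (d : R[i]).

Lemma fixed_circle_coeffs :
  (forall lam : R[i], `|lam| = 1 ->
     cinner (lam *: e1 R n) C + d != 0 /\
     lfmap A B C d (lam *: e1 R n) = lam *: e1 R n) ->
  [/\ B = 0, C 0 0 = 0, A 0 0 = d & forall i, i != 0 -> A i 0 = 0].
Proof.
move=> fixed.
have circle_eq i lam : `|lam| = 1 ->
    - ((C 0 0)^* * (i == 0)%:R) * lam ^+ 2 + (A i 0 - d * (i == 0)%:R) * lam
    + B i 0 = 0.
  case/fixed; rewrite /e1 cinnerZl cinner_delta => D_neq0.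
  move/(congr1 (fun w : 'cV[R[i]]_n.+1 => w i 0)).
  rewrite lfmap_coord -scalemxAr cinnerZl cinner_delta -colE !mxE eqxx andbT.
  move/(congr1 ( *%R^~ (lam * (C 0 0)^* + d))); rewrite divfK // => E.
  by rewrite -[RHS](subrr (lam * A i 0 + B i 0)) {2}E; ring.
have [/eqP c0 /eqP dA00 _] := circle_quadratic_eq0 (circle_eq 0).
rewrite eqxx mulr1 oppr_eq0 conjC_eq0 in c0.
rewrite eqxx mulr1 subr_eq0 in dA00.
split; [|exact/eqP|exact/eqP|].
- apply/matrixP => i k; rewrite (ord1 k) mxE.
  by have [] := circle_quadratic_eq0 (circle_eq i).
- move=> i i0; have [_ /eqP] := circle_quadratic_eq0 (circle_eq i).
  by rewrite (negbTE i0) mulr0 subr0 => /eqP.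
Qed.

End CircleFixed.

Section Slice.
Variables (R : rcfType) (n : nat) (A : 'M[R[i]]_n.+1) (C : 'cV[R[i]]_n.+1).
Variable d : R[i].
Hypotheses (selfmap : lf_selfmap A 0 C d) (A00 : A 0 0 = d) (C00 : C 0 0 = 0).
Hypothesis d_neq0 : d != 0.

Lemma lf_selfmap_offdiag_eq0 (j : 'I_n.+1) : j != 0 -> A 0 j = 0 /\ C j 0 = 0.
Proof.
move=> j0; suff [/eqP a0 /eqP g0] : A 0 j / d = 0 /\ (C j 0)^* / d = 0.
  rewrite !mulf_eq0 invr_eq0 (negbTE d_neq0) !orbF conjC_eq0 in a0 g0.
  by split; apply/eqP.
apply: ball_quotient_eq0 => x y xy.
pose z : 'cV[R[i]]_n.+1 := x *: delta_mx 0 0 + y *: delta_mx j 0.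
have z_coord k : z k 0 = x * (k == 0)%:R + y * (k == j)%:R.
  by rewrite !mxE !andbT.
have z_ball : in_ball z.
  rewrite /in_ball (@big_ord_pair _ _ 0 j) 1?eq_sym // => [|k k0 kj].
    by rewrite !z_coord !eqxx (negbTE j0) eq_sym (negbTE j0) !mulr1 !mulr0 addr0 add0r.
  by rewrite z_coord (negbTE k0) (negbTE kj) !mulr0 addr0 normr0 expr0n.
have Dz : cinner z C + d = y * (C j 0)^* + d.
  by rewrite cinnerDl !cinnerZl !cinner_delta C00 conjC0 mulr0 add0r.
have [] := selfmap z_ball; rewrite Dz => D_neq0 /(in_ball_coord 0).
rewrite lfmap_coord Dz mulmxDr -!scalemxAr -!colE !mxE A00 addr0.
have -> : x + A 0 j / d * y = (x * d + y * A 0 j) / d by field.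
have -> : 1 + (C j 0)^* / d * y = (y * (C j 0)^* + d) / d by field.
rewrite !normf_div !expr_div_n ltr_pM2r ?invr_gt0 ?exprn_gt0 ?normr_gt0 //.
by rewrite ltr_pdivrMr ?mul1r // exprn_gt0 // normr_gt0.
Qed.

Lemma lf_selfmap_denom_eq0 : C = 0.
Proof.
apply/matrixP => i k; rewrite (ord1 k) mxE.
have [->|i0] := eqVneq i 0; first exact: C00.
by have [] := lf_selfmap_offdiag_eq0 i0.
Qed.

End Slice.

Theorem proposition1 (R : rcfType) (n : nat) (hn : (0 < n)%N)
  (A : 'M[R[i]]_n.+1) (B C : 'cV[R[i]]_n.+1) (d : R[i]) :
  lf_selfmap A B C d ->
  (forall lam : R[i], `|lam| = 1 ->
     cinner (lam *: e1 R n) C + d != 0 /\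
     lfmap A B C d (lam *: e1 R n) = lam *: e1 R n) ->
  exists A' : 'M[R[i]]_n,
    forall z : 'cV[R[i]]_n.+1, in_ball z ->
      lfmap A B C d z 0 0 = z 0 0 /\
      forall k : 'I_n,
        lfmap A B C d z (lift 0 k) 0 = \sum_(j < n) A' k j * z (lift 0 j) 0.
Proof.
move=> selfmap fixed.
have [B0 C00 A00 A_col0] := fixed_circle_coeffs fixed.
have d_neq0 : d != 0.
  by have [] := fixed 1 (normr1 _); rewrite /e1 cinnerZl cinner_delta C00 conjC0 mulr0 add0r.
rewrite B0 in selfmap *.
have offdiag0 := lf_selfmap_offdiag_eq0 selfmap A00 C00 d_neq0.
have lift_neq0 (j : 'I_n) : lift 0 j != 0 by rewrite eq_sym neq_lift.
exists (\matrix_(k, j) (d^-1 * A (lift 0 k) (lift 0 j))) => z _.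
rewrite (lf_selfmap_denom_eq0 selfmap A00 C00 d_neq0) lfmap_affine.
split=> [|k]; rewrite !mxE big_ord_recl.
- rewrite A00 big1 ?addr0 => [|j _]; first by rewrite mulKf.
  by have [-> _] := offdiag0 _ (lift_neq0 j); rewrite mul0r.
- rewrite A_col0 // mul0r add0r mulr_sumr.
  by apply: eq_bigr => j _; rewrite mxE mulrA.
Qed.
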